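(* Let $\mathcal{X}\subseteq\mathbb{R}^d$ and let $\mathcal{M}$ be a mechanism on weighted data sets admitting a weighted distinguishability profile $\epsilon\colon[1,\infty)\times\mathcal{X}\to\mathbb{R}_{\ge0}$ that is differentiable in $w$, with $\epsilon'(w,\mathbf{x})=\partial\epsilon(w,\mathbf{x})/\partial w$, and let $\tilde\epsilon(\mathbf{x})=\epsilon(1,\mathbf{x})$ (the distinguishability profile of the unweighted counterpart $\widetilde{\mathcal{M}}(\{\mathbf{x}_i\})=\mathcal{M}(\{(1,\mathbf{x}_i)\})$). Let $S$ be any Poisson importance sampler, with selection-probability function $q$, and let $\psi(\mathbf{x})=\log\big(1+q(\mathbf{x})(e^{\epsilon(1/q(\mathbf{x}),\mathbf{x})}-1)\big)$ be the distinguishability profile of $\mathcal{M}\circ S$. Let $\mathbf{x}\in\mathcal{X}$. If $\epsilon(w,\mathbf{x})\le w\,\epsilon'(w,\mathbf{x})$ for all $w\ge1$, then $\psi(\mathbf{x})\ge\tilde\epsilon(\mathbf{x})$.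
   Context: A weighted data set is a finite set $\{(w_i,\mathbf{x}_i)\}$ with $w_i\ge1$, $\mathbf{x}_i\in\mathcal{X}$. Distributions $P,Q$ are $\epsilon$-indistinguishable if $P(Y)\le e^\epsilon Q(Y)$ and $Q(Y)\le e^\epsilon P(Y)$ for all measurable $Y$. A weighted distinguishability profile of $\mathcal{M}$ is a function $\epsilon\colon[1,\infty)\times\mathcal{X}\to\mathbb{R}_{\ge0}$ such that for every weighted data set $\mathcal{S}$ and every $(w',\mathbf{x}')$, $\mathcal{M}(\mathcal{S})$ and $\mathcal{M}(\mathcal{S}\cup\{(w',\mathbf{x}')\})$ are $\epsilon(w',\mathbf{x}')$-indistinguishable. A Poisson importance sampler for a function $q\colon\mathcal{X}\to(0,1]$ maps $\mathcal{D}=\{\mathbf{x}_1,\dots,\mathbf{x}_n\}$ to $\{(1/q(\mathbf{x}_i),\mathbf{x}_i)\mid\gamma_i=1\}$ with $\gamma_i$ independent Bernoulli$(q(\mathbf{x}_i))$. *)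

From HB Require Import structures.
From mathcomp Require Import all_boot all_order all_algebra.
From mathcomp Require Import finmap.
From mathcomp Require Import all_classical all_reals all_analysis.
Set Implicit Arguments. Unset Strict Implicit. Unset Printing Implicit Defensive.
Import Order.TTheory GRing.Theory Num.Theory.
Import numFieldNormedType.Exports.
Local Open Scope classical_set_scope.
Local Open Scope ring_scope.

Definition point (R : realType) (d : nat) := 'rV[R]_d.
Definition wdataset (R : realType) (d : nat) := {fset (R * 'rV[R]_d)}%fset.

Definition wds_over (R : realType) (d : nat) (X : set 'rV[R]_d)
  (S : wdataset R d) : Prop :=
  forall p, p \in S -> 1 <= p.1 /\ X p.2.

Definition indist (R : realType) (dT : measure_display) (T : measurableType dT)
  (e : R) (P Q : probability T R) : Prop :=
  forall Y : set T, measurable Y ->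
    (P Y <= (expR e)%:E * Q Y)%E /\ (Q Y <= (expR e)%:E * P Y)%E.

(* eps : [1,oo) x X -> R_{>=0} is a weighted distinguishability profile of M
   (values of eps outside [1,oo) x X are irrelevant). *)
Definition weighted_profile (R : realType) (d : nat) (X : set 'rV[R]_d)
  (dT : measure_display) (T : measurableType dT)
  (M : wdataset R d -> probability T R) (eps : R -> 'rV[R]_d -> R) : Prop :=
  (forall w x, 1 <= w -> X x -> 0 <= eps w x) /\
  (forall S, wds_over X S -> forall w' x', 1 <= w' -> X x' ->
     indist (eps w' x') (M S) (M (S `|` [fset (w', x')])%fset)).

Definition deriv_on_ge1 (R : realType) (f f' : R -> R) : Prop :=
  (forall w : R, 1 < w -> is_derive w (1 : R) f (f' w)) /\
  ((fun h : R => h^-1 * (f (1 + h) - f 1)) @ 0^'+ --> f' 1).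

Definition psi (R : realType) (d : nat) (eps : R -> 'rV[R]_d -> R)
  (q : 'rV[R]_d -> R) (x : 'rV[R]_d) : R :=
  ln (1 + q x * (expR (eps (q x)^-1 x) - 1)).

Definition eps_tilde (R : realType) (d : nat) (eps : R -> 'rV[R]_d -> R)
  (x : 'rV[R]_d) : R := eps 1 x.

From HB Require Import structures.
From mathcomp Require Import all_boot all_order all_algebra.
From mathcomp Require Import finmap.
From mathcomp Require Import all_classical all_reals all_analysis.
From mathcomp Require Import ring lra.
Import Order.TTheory GRing.Theory Num.Theory.
Import numFieldNormedType.Exports.
Local Open Scope classical_set_scope.
Local Open Scope ring_scope.

(* Write [e w] for [eps w x] and [W] for [1 / q x].  After exponentiating, the
   claim reads [expR (e 1) - 1 <= (expR (e W) - 1) / W], so it suffices that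
   [w |-> (expR (e w) - 1) / w] is nondecreasing on [[1, oo)].  Its derivative
   [(w * e' w * expR (e w) - (expR (e w) - 1)) / w ^+ 2] is nonnegative there,
   because [w * e' w >= e w] and [y * expR y >= expR y - 1] for every real [y]. *)

Lemma cvg_at_right_diff_quotient {R : realType} (f : R -> R) (a l : R) :
  (fun h : R => h^-1 * (f (a + h) - f a)) @ 0^'+ --> l -> f @ a^'+ --> f a.
Proof.
move=> dq.
have incr0 : (fun h : R => f (a + h) - f a) @ 0^'+ --> 0.
  have : (fun h : R => h * (h^-1 * (f (a + h) - f a))) @ 0^'+ --> 0 * l.
    by apply: cvgM dq; exact: cvg_at_right_filter cvg_id.
  rewrite mul0r; apply: cvg_trans; apply: near_eq_cvg; near=> h.
  by rewrite mulrA mulfV ?mul1r //; near: h; exact: nbhs_right_neq.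
have shifted : (fun h : R => f (a + h)) @ 0^'+ --> f a.
  rewrite -[X in _ --> X]add0r.
  apply: cvg_trans (cvgD incr0 (cvg_cst (f a))).
  by apply: near_eq_cvg; near=> h; rewrite subrK.
apply/cvgrPdist_lt => e e0.
have := cvgr_dist_lt _ _ shifted _ e0; rewrite !near_withinE => near_a.
apply: (proj2 (nbhs0P (fun t : R => a < t -> `|f a - f t| < e) a)).
apply: filterS (near_a (at_right_proper_filter 0)) => h /= near_h a_lt_ah.
by apply: near_h; rewrite -(ltrD2l a) addr0.
Unshelve. all: by end_near.
Qed.

Lemma expR_sub1_le_mul_expR {R : realType} (y : R) : expR y - 1 <= y * expR y.
Proof.
have := expR_ge1Dx (- y); rewrite expRN -[_^-1]mul1r ler_pdivlMr ?expR_gt0 //.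
by rewrite mulrBl mul1r => ?; lra.
Qed.

Lemma is_derive_expR_sub1_div {R : realType} (f : R -> R) (w df : R) :
  w != 0 -> is_derive w 1 f df ->
  is_derive w 1 (fun v => (expR (f v) - 1) / v)
    ((w * df * expR (f w) - (expR (f w) - 1)) / w ^+ 2).
Proof.
move=> w0 fdf.
have num : is_derive w (1 : R) (expR \o f - cst 1) (expR (f w) * df - 0).
  by apply: is_deriveB; exact: is_derive1_comp.
have inv : is_derive w (1 : R) (fun v : R => v^-1) (- w ^- 2 *: 1).
  exact: (@is_deriveV _ id).
apply: is_derive_eq (is_deriveM num inv) _.
by rewrite /GRing.scale !fctE /=; field.
Qed.

Lemma expR_sub1_le_div {R : realType} (f f' : R -> R) (W : R) :
  deriv_on_ge1 f f' -> (forall w, 1 <= w -> f w <= w * f' w) -> 1 <= W ->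
  expR (f 1) - 1 <= (expR (f W) - 1) / W.
Proof.
move=> [df df1] f_le W_ge1.
pose g w := (expR (f w) - 1) / w.
rewrite -[X in X <= _]divr1; change (g 1 <= g W).
have [->|W_neq1] := eqVneq W 1; first exact: lexx.
have W_gt1 : 1 < W by rewrite lt_def W_neq1 W_ge1.
have dg (w : R) : 1 < w -> is_derive w 1 g
    ((w * f' w * expR (f w) - (expR (f w) - 1)) / w ^+ 2).
  move=> w_gt1; apply: is_derive_expR_sub1_div (df w w_gt1).
  by rewrite gt_eqF // (lt_trans ltr01).
apply: (@ger0_derive1_ndecr _ g 1 W) => //.
- by move=> w; rewrite in_itv /= => /andP[/dg []].
- move=> w; rewrite in_itv /= => /andP[w_gt1 _].
  rewrite derive1E (@derive_val _ _ _ _ _ _ _ (dg w w_gt1)).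
  apply: divr_ge0; last exact: sqr_ge0.
  rewrite subr_ge0 (le_trans (expR_sub1_le_mul_expR (f w))) //.
  by rewrite ler_pM2r ?expR_gt0 // f_le // ltW.
- apply/continuous_within_itvP => //; split.
  + move=> w; rewrite in_itv /= => /andP[w_gt1 _].
    by have [/derivable1_diffP/differentiable_continuous] := dg w w_gt1.
  + apply: cvgM; last by apply: cvgV => //; exact: cvg_at_right_filter cvg_id.
    apply: cvgB (cvg_cst _).
    apply: (cvg_comp _ _ (cvg_at_right_diff_quotient f 1 _ df1)).
    exact: continuous_expR.
  + apply: cvg_at_left_filter.
    by have [/derivable1_diffP/differentiable_continuous] := dg W W_gt1.
Qed.

Theorem proposition3 (R : realType) (d : nat) (X : set 'rV[R]_d)
  (dT : measure_display) (T : measurableType dT)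
  (M : wdataset R d -> probability T R)
  (eps eps' : R -> 'rV[R]_d -> R)
  (q : 'rV[R]_d -> R) (x : 'rV[R]_d) :
  weighted_profile X M eps ->
  (forall y, X y -> deriv_on_ge1 (fun w => eps w y) (fun w => eps' w y)) ->
  (forall y, X y -> 0 < q y <= 1) ->
  X x ->
  (forall w, 1 <= w -> eps w x <= w * eps' w x) ->
  eps_tilde eps x <= psi eps q x.
Proof.
move=> _ deriv_eps q_range Xx eps_le.
have /andP[q_gt0 q_le1] := q_range x Xx.
have q_inv_ge1 : 1 <= (q x)^-1 by rewrite invf_ge1.
have := expR_sub1_le_div _ _ _ (deriv_eps x Xx) eps_le q_inv_ge1.
rewrite invrK mulrC lerBlDl => expR_le.
rewrite /eps_tilde /psi -[X in X <= _]expRK.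
by rewrite ler_ln ?posrE ?expR_gt0 // (lt_le_trans (expR_gt0 _) expR_le).
Qed.
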